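(* Let $0\le\alpha<1$. The radius of starlikeness of order $\alpha$ of the class of analytic functions $f(z)=z+\sum_{n\ge2}a_nz^n$ on $\mathbb{D}$ with $|a_n|\le n$ for all $n\ge2$ is the real root in $(0,1)$ of the equation \[2(1-\alpha)(1-r)^3=1-\alpha+(1+\alpha)r.\] In particular, the radius of starlikeness of this class is \[r_0(0)=1+\frac{1}{6^{2/3}}\left((\sqrt{330}-18)^{1/3}-(\sqrt{330}+18)^{1/3}\right)\approx0.164878,\] and the radius of starlikeness of order $1/2$, which equals the radius of parabolic starlikeness of the class, is \[r_0(1/2)=1+\frac{1}{\sqrt2}\left((3-2\sqrt2)^{1/3}-(3+2\sqrt2)^{1/3}\right)\approx0.120385.\] These results are sharp.
   Context: $\mathbb{D}=\{z\in\mathbb{C}:|z|<1\}$. For a class $\mathcal{F}$ of analytic functions on $\mathbb{D}$ normalized by $f(0)=0$, $f'(0)=1$, and $0\le\alpha<1$, the radius of starlikeness of order $\alpha$ of $\mathcal{F}$ is the supremum of $r\in(0,1]$ such that every $f\in\mathcal{F}$ satisfies $f(z)\ne0$ for $0<|z|<r$ and $\operatorname{Re}\big(zf'(z)/f(z)\big)>\alpha$ for $|z|<r$ (the quotient being $1$ at $z=0$); the radius of starlikeness means the case $\alpha=0$. The radius of parabolic starlikeness of $\mathcal{F}$ is the supremum of $r\in(0,1]$ such that every $f\in\mathcal{F}$ satisfies $\operatorname{Re}\big(zf'(z)/f(z)\big)>\left|zf'(z)/f(z)-1\right|$ for $|z|<r$. *)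

From Stdlib Require Import Reals.
From Coquelicot Require Import Coquelicot.
Open Scope R_scope.

Definition classF (f : C -> C) : Prop :=
  exists a : nat -> C,
    a 0%nat = 0%C /\ a 1%nat = 1%C /\
    (forall n : nat, (2 <= n)%nat -> Cmod (a n) <= INR n) /\
    (forall z : C, Cmod z < 1 ->
       @is_series C_AbsRing C_NormedModule (fun n => (a n * Cpow z n)%C) (f z)).

Definition cderiv_at (f : C -> C) (z d : C) : Prop :=
  @is_derive C_AbsRing C_NormedModule f z d.

(* f is starlike of order alpha in |z| < r.  At z = 0 the quotient z f'/f is
   1 > alpha by convention, so only z <> 0 is constrained. *)
Definition starlike_order_in (alpha r : R) (f : C -> C) : Prop :=
  (forall z : C, 0 < Cmod z < r -> f z <> 0%C) /\
  (forall z : C, 0 < Cmod z < r ->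
     exists d : C, cderiv_at f z d /\ alpha < Re (z * d / f z)%C).

Definition starlike_radius_set (F : (C -> C) -> Prop) (alpha : R) (r : R) : Prop :=
  0 < r <= 1 /\ forall f, F f -> starlike_order_in alpha r f.

Definition is_radius_starlike (F : (C -> C) -> Prop) (alpha rho : R) : Prop :=
  is_lub (starlike_radius_set F alpha) rho.

(* parabolic starlikeness in |z| < r: Re q > |q - 1| with q = z f'/f
   (q = 1 at z = 0, where the inequality 1 > 0 holds). *)
Definition parabolic_in (r : R) (f : C -> C) : Prop :=
  forall z : C, 0 < Cmod z < r ->
    f z <> 0%C /\
    exists d : C, cderiv_at f z d /\
      Cmod ((z * d / f z) - 1)%C < Re (z * d / f z)%C.

Definition parabolic_radius_set (F : (C -> C) -> Prop) (r : R) : Prop :=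
  0 < r <= 1 /\ forall f, F f -> parabolic_in r f.

Definition is_radius_parabolic (F : (C -> C) -> Prop) (rho : R) : Prop :=
  is_lub (parabolic_radius_set F) rho.

From Stdlib Require Import Reals Lra Lia Psatz ClassicalEpsilon.
From Coquelicot Require Import Coquelicot.
Open Scope R_scope.

(* For f(z) = z + Σ a_n z^n with |a_n| <= n and |z| = ρ, comparison with the series
   Σ n ρ^n = ρ/(1-ρ)^2 and Σ n^2 ρ^n = ρ(1+ρ)/(1-ρ)^3 gives
     |f(z) - z| <= ρ/(1-ρ)^2 - ρ   and   |z f'(z) - f(z)| <= Σ n(n-1) ρ^n = 2ρ^2/(1-ρ)^3,
   hence |z f'/f - 1| <= 2ρ / ((1-ρ)(2(1-ρ)^2 - 1)), which is < 1 - α exactly for ρ below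
   the root r of the cubic; then Re (z f'/f) > α.  The function
   z - Σ_{n>=2} n z^n = 2z - z/(1-z)^2 attains z f'/f = α at z = r, so no larger radius
   works.  For α = 1/2, |q - 1| < 1/2 with q = z f'/f gives Re q > 1/2 > |q - 1|, i.e.
   parabolic starlikeness, while the extremal value q = 1/2 violates it.  The two explicit
   radii are Cardano's formula for the cubic. *)

Lemma is_lim_seq_succ_ratio_pow (k : nat) :
  is_lim_seq (fun n => (INR (S (S n)) / INR (S n)) ^ k) 1.
Proof.
  assert (ratio : is_lim_seq (fun n => INR (S (S n)) / INR (S n)) 1).
  { apply is_lim_seq_ext with (fun n => 1 + / INR (S n)).
    { intros n. rewrite (S_INR (S n)). field. apply not_0_INR. discriminate. }
    replace (Finite 1) with (Rbar_plus 1 0) by (simpl; f_equal; ring).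
    apply is_lim_seq_plus'; [apply is_lim_seq_const|].
    apply (is_lim_seq_incr_1 (fun n => / INR n)).
    exact (is_lim_seq_inv _ _ is_lim_seq_INR ltac:(discriminate)). }
  induction k as [|k IHk]; [apply is_lim_seq_const|].
  replace (Finite 1) with (Rbar_mult 1 1) by (simpl; f_equal; ring).
  exact (is_lim_seq_mult' _ _ _ _ ratio IHk).
Qed.

Lemma ex_series_succ_pow_geom (k : nat) (r : R) : 0 < r < 1 ->
  ex_series (fun n => INR (S n) ^ k * r ^ n).
Proof.
  intros Hr.
  assert (pos : forall n, 0 < INR (S n) ^ k * r ^ n).
  { intros n. apply Rmult_lt_0_compat; apply pow_lt; [apply lt_0_INR; lia|lra]. }
  apply ex_series_ext with (fun n => Rabs (INR (S n) ^ k * r ^ n)).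
  { intros n. apply Rabs_pos_eq, Rlt_le, pos. }
  apply ex_series_DAlembert with r; [lra| intros n; apply Rgt_not_eq, pos|].
  apply is_lim_seq_ext with (fun n => (INR (S (S n)) / INR (S n)) ^ k * r).
  { intros n. rewrite Rabs_pos_eq.
    - rewrite <- tech_pow_Rmult. unfold Rdiv. rewrite Rpow_mult_distr, pow_inv.
      field. split; apply pow_nonzero; [lra|apply not_0_INR; discriminate].
    - apply Rlt_le, Rdiv_lt_0_compat; apply pos. }
  replace (Finite r) with (Rbar_mult 1 r) by (simpl; f_equal; ring).
  apply is_lim_seq_scal_r, is_lim_seq_succ_ratio_pow.
Qed.

Lemma ex_series_pow_geom (k : nat) (r : R) : 0 < r < 1 ->
  ex_series (fun n => INR n ^ k * r ^ n).
Proof.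
  intros Hr.
  apply (@ex_series_le R_AbsRing R_CompleteNormedModule) with
    (fun n => INR (S n) ^ k * r ^ n); [|exact (ex_series_succ_pow_geom k r Hr)].
  intros n. change norm with Rabs.
  pose proof (pos_INR n) as Hn.
  rewrite Rabs_pos_eq by (apply Rmult_le_pos; apply pow_le; lra).
  apply Rmult_le_compat_r; [apply pow_le; lra|].
  apply pow_incr. rewrite S_INR. lra.
Qed.

Lemma is_series_shift_recurrence (s g : nat -> R) (c l lg : R) :
  s 0%nat = 0 -> is_series s l -> is_series g lg ->
  (forall n, s (S n) = c * (s n + g n)) -> l = c * (l + lg).
Proof.
  intros s0 Hs Hg Hrec.
  assert (shifted : is_series (fun n => s (S n)) l).
  { apply is_series_incr_1. rewrite s0. change (plus l 0) with (l + 0).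
    now rewrite Rplus_0_r. }
  assert (combined : is_series (fun n => s (S n)) (c * (l + lg))).
  { apply is_series_ext with (fun n => scal c (plus (s n) (g n))).
    { intros n. now rewrite Hrec. }
    exact (is_series_scal c _ _ (is_series_plus _ _ _ _ Hs Hg)). }
  pose proof (is_series_unique _ _ combined) as U.
  now rewrite (is_series_unique _ _ shifted) in U.
Qed.

Lemma is_series_n_geom (r : R) : 0 < r < 1 ->
  is_series (fun n => INR n * r ^ n) (r / (1 - r) ^ 2).
Proof.
  intros Hr. destruct (ex_series_pow_geom 1 r Hr) as [l Hl].
  assert (Hl1 : is_series (fun n => INR n * r ^ n) l).
  { apply is_series_ext with (2 := Hl). intros n. simpl. ring. }
  pose proof (is_series_geom r ltac:(rewrite Rabs_pos_eq; lra)) as geom.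
  assert (E : l = r * (l + / (1 - r))).
  { apply (is_series_shift_recurrence (fun n => INR n * r ^ n) (fun n => r ^ n));
      [simpl; ring | exact Hl1 | exact geom | intros n; rewrite S_INR; simpl; ring]. }
  replace (r / (1 - r) ^ 2) with l; [exact Hl1|].
  apply Rmult_eq_reg_r with (1 - r); [|lra].
  replace (l * (1 - r)) with (r * / (1 - r)) by nra. field. lra.
Qed.

Lemma is_series_n2_geom (r : R) : 0 < r < 1 ->
  is_series (fun n => INR n ^ 2 * r ^ n) (r * (1 + r) / (1 - r) ^ 3).
Proof.
  intros Hr. destruct (ex_series_pow_geom 2 r Hr) as [l Hl].
  assert (Hg : is_series (fun n => 2 * (INR n * r ^ n) + r ^ n)
              (2 * (r / (1 - r) ^ 2) + / (1 - r))).
  { apply (is_series_plus (fun n => 2 * (INR n * r ^ n))).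
    - apply (is_series_scal_l (K := R_AbsRing) (V := R_NormedModule) 2).
      exact (is_series_n_geom r Hr).
    - apply is_series_geom. rewrite Rabs_pos_eq; lra. }
  assert (E : l = r * (l + (2 * (r / (1 - r) ^ 2) + / (1 - r)))).
  { apply (is_series_shift_recurrence (fun n => INR n ^ 2 * r ^ n)
             (fun n => 2 * (INR n * r ^ n) + r ^ n));
      [simpl; ring | exact Hl | exact Hg | intros n; rewrite S_INR; simpl; ring]. }
  replace (r * (1 + r) / (1 - r) ^ 3) with l; [exact Hl|].
  apply Rmult_eq_reg_r with (1 - r); [|lra].
  replace (l * (1 - r)) with (r * (2 * (r / (1 - r) ^ 2) + / (1 - r))) by nra.
  field. lra.
Qed.

Notation is_Cseries := (@is_series C_AbsRing C_NormedModule).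

Lemma is_Cseries_scal (c : C) (u : nat -> C) (l : C) :
  is_Cseries u l -> is_Cseries (fun n => c * u n)%C (c * l)%C.
Proof. exact (is_series_scal (K := C_AbsRing) (V := C_NormedModule) c u l). Qed.

Lemma is_Cseries_minus (u v : nat -> C) (lu lv : C) :
  is_Cseries u lu -> is_Cseries v lv -> is_Cseries (fun n => u n - v n)%C (lu - lv)%C.
Proof. exact (is_series_minus (K := C_AbsRing) (V := C_NormedModule) u v lu lv). Qed.

Lemma is_Cseries_ext (u v : nat -> C) (l : C) :
  (forall n, u n = v n) -> is_Cseries u l -> is_Cseries v l.
Proof. apply is_series_ext. Qed.

Lemma is_Cseries_incr_1 (u : nat -> C) (l : C) :
  is_Cseries u (l + u 0%nat)%C -> is_Cseries (fun n => u (S n)) l.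
Proof. exact (is_series_incr_1 (K := C_AbsRing) (V := C_NormedModule) u l). Qed.

Lemma is_Cseries_decr_1 (u : nat -> C) (l : C) :
  is_Cseries (fun n => u (S n)) (l - u 0%nat)%C -> is_Cseries u l.
Proof. exact (is_series_decr_1 (K := C_AbsRing) (V := C_NormedModule) u l). Qed.

Lemma is_Cseries_unique (u : nat -> C) (l1 l2 : C) :
  is_Cseries u l1 -> is_Cseries u l2 -> l1 = l2.
Proof. exact (filterlim_locally_unique (F := eventually) (sum_n u) l1 l2). Qed.

Lemma Cmod_series_le (u : nat -> C) (v : nat -> R) (U : C) (V : R) :
  is_Cseries u U -> is_series v V -> (forall n, Cmod (u n) <= v n) -> Cmod U <= V.
Proof.
  intros HU HV Huv.
  assert (partial : forall N, Cmod (sum_n u N) <= sum_n v N).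
  { intros N. eapply Rle_trans.
    - apply (norm_sum_n_m (K := C_AbsRing) (V := C_NormedModule)).
    - apply sum_n_m_le. intros n. apply Huv. }
  assert (lim_norm : is_lim_seq (fun N => Cmod (sum_n u N)) (Cmod U)).
  { apply (filterlim_comp _ _ _ (sum_n u) (@norm C_AbsRing C_NormedModule)
             eventually (locally U)); [exact HU|].
    exact (filterlim_norm (K := C_AbsRing) (V := C_NormedModule) U). }
  exact (is_lim_seq_le _ _ _ _ partial lim_norm (HV : is_lim_seq (sum_n v) V)).
Qed.

Lemma is_Cseries_RtoC (u : nat -> R) (l : R) :
  is_series u l -> is_Cseries (fun n => RtoC (u n)) (RtoC l).
Proof.
  intros H.
  assert (partial : forall N, sum_n (fun n => RtoC (u n)) N = RtoC (sum_n u N)).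
  { induction N as [|N IH]; [now rewrite !sum_O|].
    rewrite !sum_Sn, IH.
    change (RtoC (sum_n u N) + RtoC (u (S N)) = RtoC (sum_n u N + u (S N)))%C.
    now rewrite RtoC_plus. }
  unfold is_series. apply filterlim_ext with (fun N => RtoC (sum_n u N)).
  { intros N. now rewrite partial. }
  apply filterlim_comp with (locally l); [exact H|].
  intros P [eps HP]. exists eps. intros y Hy. apply HP. split; [exact Hy|apply ball_center].
Qed.

Definition Cpow_taylor_rem (y z : C) (n : nat) : C :=
  (y ^ S n - z ^ S n - INR (S n) * z ^ n * (y - z))%C.

Lemma Cpow_taylor_rem_S (y z : C) (n : nat) :
  Cpow_taylor_rem y z (S n) =
  (y * Cpow_taylor_rem y z n + INR (S n) * z ^ n * ((y - z) * (y - z)))%C.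
Proof. unfold Cpow_taylor_rem. rewrite (S_INR (S n)), RtoC_plus, !Cpow_S. ring. Qed.

(* The factor [p] on the left avoids the exponent [p ^ (n - 1)] at [n = 0]. *)
Lemma Cmod_Cpow_taylor_rem_le (y z : C) (p : R) (n : nat) :
  0 < p -> Cmod y <= p -> Cmod z <= p ->
  Cmod (Cpow_taylor_rem y z n) * p <= INR (S n) ^ 2 * p ^ n * Cmod (y - z) ^ 2.
Proof.
  intros Hp Hy Hz. set (c := Cmod (y - z)).
  assert (Hc : 0 <= c) by apply Cmod_ge_0.
  induction n as [|n IH].
  - replace (Cpow_taylor_rem y z 0) with (RtoC 0)
      by (unfold Cpow_taylor_rem; simpl; ring).
    rewrite Cmod_0. simpl. nra.
  - set (e := Cmod (Cpow_taylor_rem y z n)) in IH.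
    set (N := INR (S n)) in IH.
    assert (HN : 0 <= N) by apply pos_INR.
    assert (Hpn : 0 <= p ^ n) by (apply pow_le; lra).
    assert (Hzn : Cmod z ^ n <= p ^ n) by (apply pow_incr; split; [apply Cmod_ge_0|lra]).
    assert (step : Cmod (Cpow_taylor_rem y z (S n)) <= p * e + N * p ^ n * c ^ 2).
    { rewrite Cpow_taylor_rem_S. eapply Rle_trans; [apply Cmod_triangle|].
      rewrite !Cmod_mult, Cmod_pow, Cmod_R, Rabs_pos_eq by apply pos_INR.
      apply Rplus_le_compat.
      - apply Rmult_le_compat_r; [apply Cmod_ge_0|exact Hy].
      - fold N c. replace (c ^ 2) with (c * c) by ring. apply Rmult_le_compat_r; [nra|].
        apply Rmult_le_compat_l; [exact HN|exact Hzn]. }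
    replace (INR (S (S n))) with (N + 1) by (unfold N; rewrite (S_INR (S n)); ring).
    assert (He : 0 <= e) by apply Cmod_ge_0.
    assert (HQ : 0 <= p ^ n * c ^ 2 * p) by (apply Rmult_le_pos; nra).
    apply Rle_trans with ((p * e + N * p ^ n * c ^ 2) * p); [apply Rmult_le_compat_r; lra|].
    simpl (p ^ S n). nra.
Qed.

Lemma cderiv_at_of_quadratic_remainder (f : C -> C) (z d : C) (delta K : R) :
  0 < delta -> 0 <= K ->
  (forall y, Cmod (y - z) < delta ->
     Cmod (f y - f z - (y - z) * d)%C <= K * Cmod (y - z) ^ 2) ->
  cderiv_at f z d.
Proof.
  intros Hdelta HK Hrem. split; [apply is_linear_scal_l|].
  intros x Hx.
  apply (is_filter_lim_locally_unique (K := C_AbsRing)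
           (V := AbsRing_NormedModule C_AbsRing)) in Hx. subst x.
  intros eps. apply (locally_norm_le_locally (K := C_AbsRing)
                       (V := AbsRing_NormedModule C_AbsRing)).
  assert (Hmin : 0 < Rmin delta (eps / (K + 1))).
  { apply Rmin_glb_lt; [exact Hdelta|]. apply Rdiv_lt_0_compat; [apply cond_pos|lra]. }
  exists (mkposreal _ Hmin). intros y Hy.
  change (Cmod (y - z) < Rmin delta (eps / (K + 1))) in Hy.
  change (Cmod (f y - f z - (y - z) * d)%C <= eps * Cmod (y - z)).
  pose proof (Cmod_ge_0 (y - z)) as Hc.
  pose proof (cond_pos eps) as Heps.
  assert (small : (K + 1) * Cmod (y - z) < eps).
  { apply Rlt_le_trans with ((K + 1) * (eps / (K + 1))).
    - apply Rmult_lt_compat_l; [lra|]. eapply Rlt_le_trans; [exact Hy|apply Rmin_r].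
    - right. field. lra. }
  eapply Rle_trans.
  - apply Hrem. eapply Rlt_le_trans; [exact Hy|apply Rmin_l].
  - simpl. nra.
Qed.

Section PolynomiallyBoundedPowerSeries.

Variables (a : nat -> C) (k : nat).
Hypothesis a_bound : forall n, Cmod (a n) <= INR n ^ k.

Lemma ex_Cseries_pow (z : C) : Cmod z < 1 ->
  exists l, is_Cseries (fun n => a n * z ^ n)%C l.
Proof.
  intros Hz. pose proof (Cmod_ge_0 z) as Hz0.
  apply (@ex_series_le C_AbsRing C_CompleteNormedModule)
    with (fun n => INR n ^ k * ((Cmod z + 1) / 2) ^ n).
  - intros n. change norm with Cmod. rewrite Cmod_mult, Cmod_pow.
    apply Rmult_le_compat; [apply Cmod_ge_0|apply pow_le, Cmod_ge_0|apply a_bound|].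
    apply pow_incr. lra.
  - apply ex_series_pow_geom. lra.
Qed.

Lemma ex_Cseries_derived (z : C) : Cmod z < 1 ->
  exists d, is_Cseries (fun n => INR (S n) * a (S n) * z ^ n)%C d.
Proof.
  intros Hz. pose proof (Cmod_ge_0 z) as Hz0.
  apply (@ex_series_le C_AbsRing C_CompleteNormedModule)
    with (fun n => INR (S n) ^ S k * ((Cmod z + 1) / 2) ^ n).
  - intros n. change norm with Cmod.
    rewrite !Cmod_mult, Cmod_pow, Cmod_R, Rabs_pos_eq by apply pos_INR.
    rewrite <- tech_pow_Rmult, !Rmult_assoc.
    apply Rmult_le_compat_l; [apply pos_INR|].
    apply Rmult_le_compat; [apply Cmod_ge_0|apply pow_le, Cmod_ge_0|apply a_bound|].
    apply pow_incr. lra.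
  - apply ex_series_succ_pow_geom. lra.
Qed.

Variable f : C -> C.
Hypothesis f_sum : forall z, Cmod z < 1 -> is_Cseries (fun n => a n * z ^ n)%C (f z).

Lemma is_Cseries_tail (z : C) : Cmod z < 1 ->
  is_Cseries (fun n => a (S n) * z ^ S n)%C (f z - a 0%nat)%C.
Proof.
  intros Hz. apply (is_Cseries_incr_1 (fun n => a n * z ^ n)%C).
  replace (f z - a 0%nat + a 0%nat * z ^ 0)%C with (f z) by (simpl; ring).
  exact (f_sum z Hz).
Qed.

Lemma power_series_quadratic_remainder (z d : C) (p : R) :
  Cmod z < p < 1 -> is_Cseries (fun n => INR (S n) * a (S n) * z ^ n)%C d ->
  exists K, 0 <= K /\ forall y, Cmod (y - z) < p - Cmod z ->
    Cmod (f y - f z - (y - z) * d)%C <= K * Cmod (y - z) ^ 2.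
Proof.
  intros Hp Hd. pose proof (Cmod_ge_0 z) as Hz0.
  destruct (ex_series_succ_pow_geom (k + 2) p ltac:(lra)) as [s Hs].
  exists (Rabs s / p). split.
  { apply Rmult_le_pos; [apply Rabs_pos|apply Rlt_le, Rinv_0_lt_compat; lra]. }
  intros y Hy. set (c := Cmod (y - z)).
  assert (Hyp : Cmod y <= p).
  { replace y with (z + (y - z))%C by ring.
    eapply Rle_trans; [apply Cmod_triangle|lra]. }
  assert (rem : is_Cseries (fun n => a (S n) * Cpow_taylor_rem y z n)%C
                  (f y - f z - (y - z) * d)%C).
  { replace (f y - f z - (y - z) * d)%C
      with (f y - a 0%nat - (f z - a 0%nat) - (y - z) * d)%C by ring.
    eapply is_Cseries_ext;
      [|exact (is_Cseries_minus _ _ _ _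
                 (is_Cseries_minus _ _ _ _ (is_Cseries_tail y ltac:(lra))
                                           (is_Cseries_tail z ltac:(lra)))
                 (is_Cseries_scal (y - z) _ _ Hd))].
    intros n. unfold Cpow_taylor_rem. ring. }
  eapply Rle_trans.
  - apply (Cmod_series_le _ _ _ _ rem (is_series_scal_r (c ^ 2 / p) _ _ Hs)).
    intros n. rewrite Cmod_mult.
    pose proof (Cmod_Cpow_taylor_rem_le y z p n ltac:(lra) Hyp ltac:(lra)) as Hrem.
    fold c in Hrem.
    assert (Hrem' : Cmod (Cpow_taylor_rem y z n) <= INR (S n) ^ 2 * p ^ n * (c ^ 2 / p)).
    { apply Rmult_le_reg_r with p; [lra|].
      replace (INR (S n) ^ 2 * p ^ n * (c ^ 2 / p) * p)
        with (INR (S n) ^ 2 * p ^ n * c ^ 2) by (field; lra). exact Hrem. }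
    eapply Rle_trans.
    + apply Rmult_le_compat; [apply Cmod_ge_0|apply Cmod_ge_0|apply a_bound|exact Hrem'].
    + right. rewrite pow_add. ring.
  - apply Rle_trans with (Rabs s * (c ^ 2 / p)).
    + apply Rmult_le_compat_r; [|apply Rle_abs].
      apply Rmult_le_pos; [apply pow2_ge_0|apply Rlt_le, Rinv_0_lt_compat; lra].
    + right. unfold Rdiv. ring.
Qed.

Lemma power_series_cderiv (z : C) : Cmod z < 1 ->
  exists d, cderiv_at f z d /\ is_Cseries (fun n => INR n * a n * z ^ n)%C (z * d)%C.
Proof.
  intros Hz. pose proof (Cmod_ge_0 z) as Hz0.
  destruct (ex_Cseries_derived z Hz) as [d Hd].
  exists d. split.
  - destruct (power_series_quadratic_remainder z d ((Cmod z + 1) / 2) ltac:(lra) Hd)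
      as [K [HK Hrem]].
    apply (cderiv_at_of_quadratic_remainder f z d ((Cmod z + 1) / 2 - Cmod z) K);
      [lra|exact HK|exact Hrem].
  - apply is_Cseries_decr_1.
    replace (z * d - INR 0 * a 0%nat * z ^ 0)%C with (z * d)%C by (simpl; ring).
    eapply is_Cseries_ext; [|exact (is_Cseries_scal z _ _ Hd)].
    intros n. cbv beta. rewrite Cpow_S. ring.
Qed.

End PolynomiallyBoundedPowerSeries.

Lemma classF_growth_bounds (a : nat -> C) (f : C -> C) (z : C) :
  a 0%nat = 0%C -> a 1%nat = 1%C -> (forall n, Cmod (a n) <= INR n) ->
  (forall z, Cmod z < 1 -> is_Cseries (fun n => a n * z ^ n)%C (f z)) ->
  0 < Cmod z < 1 ->
  exists d, cderiv_at f z d /\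
    Cmod (f z - z)%C <= Cmod z / (1 - Cmod z) ^ 2 - Cmod z /\
    Cmod (z * d - f z)%C
      <= Cmod z * (1 + Cmod z) / (1 - Cmod z) ^ 3 - Cmod z / (1 - Cmod z) ^ 2.
Proof.
  intros a0 a1 Ha Hf Hz. set (rho := Cmod z) in *.
  assert (Ha1 : forall n, Cmod (a n) <= INR n ^ 1) by (intros n; rewrite pow_1; apply Ha).
  destruct (power_series_cderiv a 1 Ha1 f Hf z (proj2 Hz)) as [d [Hd Hzd]].
  exists d. split; [exact Hd|]. split.
  - assert (tail2 : is_Cseries (fun n => a (S (S n)) * z ^ S (S n))%C (f z - z)%C).
    { apply (is_Cseries_incr_1 (fun n => a (S n) * z ^ S n)%C).
      replace (f z - z + a 1%nat * z ^ 1)%C with (f z - a 0%nat)%C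
        by (rewrite a0, a1; simpl; ring).
      exact (is_Cseries_tail a f Hf z (proj2 Hz)). }
    assert (sum2 : is_series (fun n => INR (S (S n)) * rho ^ S (S n))
                     (rho / (1 - rho) ^ 2 - rho)).
    { apply (is_series_incr_1 (fun n => INR (S n) * rho ^ S n)).
      apply (is_series_incr_1 (fun n => INR n * rho ^ n)).
      pose proof (is_series_n_geom rho Hz) as H.
      replace (rho / (1 - rho) ^ 2)
        with (rho / (1 - rho) ^ 2 - rho + INR 1 * rho ^ 1 + INR 0 * rho ^ 0) in H
        by (simpl; ring).
      exact H. }
    apply (Cmod_series_le _ _ _ _ tail2 sum2). intros n.
    rewrite Cmod_mult, Cmod_pow. apply Rmult_le_compat_r; [apply pow_le, Cmod_ge_0|apply Ha].
  - assert (sum : is_series (fun n => INR n ^ 2 * rho ^ n - INR n * rho ^ n)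
                    (rho * (1 + rho) / (1 - rho) ^ 3 - rho / (1 - rho) ^ 2)).
    { exact (is_series_minus _ _ _ _ (is_series_n2_geom rho Hz) (is_series_n_geom rho Hz)). }
    apply (Cmod_series_le _ _ _ _ (is_Cseries_minus _ _ _ _ Hzd (Hf z (proj2 Hz))) sum).
    intros n.
    replace (INR n * a n * z ^ n - a n * z ^ n)%C with ((INR n - 1) * a n * z ^ n)%C
      by ring.
    rewrite !Cmod_mult, Cmod_pow. fold rho.
    destruct n as [|n].
    + rewrite a0, Cmod_0. simpl. lra.
    + rewrite <- RtoC_minus, Cmod_R, Rabs_pos_eq by (rewrite S_INR; pose proof (pos_INR n); lra).
      pose proof (pow_le rho (S n) (Cmod_ge_0 z)).
      replace (INR (S n) ^ 2 * rho ^ S n - INR (S n) * rho ^ S n)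
        with ((INR (S n) - 1) * INR (S n) * rho ^ S n) by ring.
      apply Rmult_le_compat_r; [lra|]. apply Rmult_le_compat_l; [|apply Ha].
      rewrite S_INR. pose proof (pos_INR n). lra.
Qed.

Lemma Cmod_div_sub_1_lt (z F G : C) (u v beta : R) :
  0 < beta -> Cmod (F - z)%C <= u -> Cmod (G - F)%C <= v -> v < beta * (Cmod z - u) ->
  F <> 0%C /\ Cmod (G / F - 1)%C < beta.
Proof.
  intros Hbeta HF HG Hv.
  assert (HFz : Cmod z - u <= Cmod F).
  { pose proof (Cmod_triangle F (z - F)%C) as T.
    replace (F + (z - F))%C with z in T by ring.
    replace (z - F)%C with (- (F - z))%C in T by ring. rewrite Cmod_opp in T. lra. }
  pose proof (Cmod_ge_0 (G - F)%C).
  assert (Hpos : 0 < Cmod z - u) by nra.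
  assert (F0 : F <> 0%C) by (intros E; rewrite E, Cmod_0 in HFz; lra).
  split; [exact F0|].
  replace (G / F - 1)%C with ((G - F) / F)%C by (field; exact F0).
  rewrite Cmod_div by exact F0.
  apply Rmult_lt_reg_r with (Cmod F); [apply Cmod_gt_0, F0|].
  unfold Rdiv. rewrite Rmult_assoc, Rinv_l, Rmult_1_r by (apply Rgt_not_eq, Cmod_gt_0, F0).
  nra.
Qed.

Lemma Re_ge_1_sub_Cmod (q : C) : 1 - Cmod (q - 1)%C <= Re q.
Proof.
  pose proof (re_le_Cmod (q - 1)%C) as H.
  replace (Re (q - 1)%C) with (Re q - 1) in H
    by (unfold Cminus; rewrite re_plus, re_opp, re_RtoC; ring).
  pose proof (Rle_abs (- (Re q - 1))) as H'. rewrite Rabs_Ropp in H'. lra.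
Qed.

Definition radius_eq (alpha r : R) : Prop :=
  2 * (1 - alpha) * (1 - r) ^ 3 = 1 - alpha + (1 + alpha) * r.

(* [(1 - α)(2(1 - ρ)^3 - (1 - ρ)) - 2ρ] is decreasing in [ρ] and vanishes at the root. *)
Lemma radius_eq_lt (al r rho : R) :
  0 <= al < 1 -> 0 < rho < r -> r < 1 -> radius_eq al r ->
  2 * rho < (1 - al) * (2 * (1 - rho) ^ 3 - (1 - rho)).
Proof.
  unfold radius_eq. intros Hal Hrho Hr Hroot.
  set (Q := (1 - rho) ^ 2 + (1 - rho) * (1 - r) + (1 - r) ^ 2).
  assert (HQ : 0 <= Q) by (unfold Q; nra).
  assert (E : (1 - al) * (2 * (1 - rho) ^ 3 - (1 - rho)) - 2 * rho =
              (r - rho) * ((1 - al) * (2 * Q - 1) + 2)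
              + ((1 - al) * (2 * (1 - r) ^ 3 - (1 - r)) - 2 * r)) by (unfold Q; ring).
  assert (0 < (r - rho) * ((1 - al) * (2 * Q - 1) + 2)) by (apply Rmult_lt_0_compat; nra).
  nra.
Qed.

Lemma classF_quotient_estimate (al r : R) (f : C -> C) (z : C) :
  0 <= al < 1 -> 0 < r < 1 -> radius_eq al r -> classF f -> 0 < Cmod z < r ->
  f z <> 0%C /\ exists d, cderiv_at f z d /\ Cmod (z * d / f z - 1)%C < 1 - al.
Proof.
  intros Hal Hr Hroot [a [a0 [a1 [Ha Hf]]]] Hz.
  assert (Ha' : forall n, Cmod (a n) <= INR n).
  { intros [|[|n]]; [rewrite a0, Cmod_0 | rewrite a1, Cmod_1 | apply Ha; lia]; simpl; lra. }
  destruct (classF_growth_bounds a f z a0 a1 Ha' Hf ltac:(lra)) as [d [Hd [HF HG]]].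
  set (rho := Cmod z) in *.
  assert (gap : rho * (1 + rho) / (1 - rho) ^ 3 - rho / (1 - rho) ^ 2
                < (1 - al) * (rho - (rho / (1 - rho) ^ 2 - rho))).
  { pose proof (radius_eq_lt al r rho Hal ltac:(lra) ltac:(lra) Hroot).
    apply Rminus_lt. replace (_ - _) with
      (- (rho * ((1 - al) * (2 * (1 - rho) ^ 3 - (1 - rho)) - 2 * rho) / (1 - rho) ^ 3))
      by (field; lra).
    apply Ropp_lt_gt_0_contravar, Rdiv_lt_0_compat; [nra|apply pow_lt; lra]. }
  destruct (Cmod_div_sub_1_lt z (f z) (z * d)%C _ _ (1 - al) ltac:(lra) HF HG gap)
    as [F0 Hq].
  split; [exact F0|]. exists d. split; assumption.
Qed.

Definition extremal_coef (n : nat) : R :=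
  match n with 1%nat => 1 | _ => - INR n end.

(* The extremal function [z - Σ_{n≥2} n z^n = 2z - z/(1-z)^2], taken as the sum
   of its series; off the unit disc it is an arbitrary value. *)
Definition extremal (z : C) : C :=
  epsilon (inhabits (RtoC 0))
    (fun l : C => is_Cseries (fun n => RtoC (extremal_coef n) * z ^ n)%C l).

Lemma Cmod_extremal_coef (n : nat) : Cmod (RtoC (extremal_coef n)) <= INR n ^ 1.
Proof.
  rewrite pow_1, Cmod_R. destruct n as [|[|n]].
  - simpl. rewrite Ropp_0, Rabs_R0. lra.
  - simpl. rewrite Rabs_R1. lra.
  - unfold extremal_coef. rewrite Rabs_Ropp, Rabs_pos_eq by apply pos_INR. lra.
Qed.

Lemma extremal_series (z : C) : Cmod z < 1 ->
  is_Cseries (fun n => RtoC (extremal_coef n) * z ^ n)%C (extremal z).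
Proof.
  intros Hz. unfold extremal. apply epsilon_spec, (ex_Cseries_pow _ 1 Cmod_extremal_coef z Hz).
Qed.

Lemma classF_extremal : classF extremal.
Proof.
  exists (fun n => RtoC (extremal_coef n)). repeat split.
  - simpl. now rewrite Ropp_0.
  - intros n _. rewrite <- pow_1. apply Cmod_extremal_coef.
  - exact extremal_series.
Qed.

Lemma is_series_supported_at_1 (u : nat -> R) :
  (forall n, n <> 1%nat -> u n = 0) -> is_series u (u 1%nat).
Proof.
  intros Hu. apply is_series_decr_1, is_series_decr_1.
  rewrite (Hu 0%nat) by discriminate.
  apply is_series_ext with (fun _ => 0).
  { intros n. symmetry. apply Hu. discriminate. }
  change (is_series (fun _ : nat => 0) (u 1%nat + - 0 + - u 1%nat)).
  replace (u 1%nat + - 0 + - u 1%nat) with 0 by ring.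
  change (is_lim_seq (sum_n (fun _ => 0)) 0).
  apply is_lim_seq_ext with (fun _ => 0); [|apply is_lim_seq_const].
  intros n. rewrite sum_n_const. ring.
Qed.

Lemma extremal_real (r : R) : 0 < r < 1 ->
  extremal (RtoC r) = RtoC (2 * r - r / (1 - r) ^ 2) /\
  forall d, cderiv_at extremal (RtoC r) d ->
    (RtoC r * d)%C = RtoC (2 * r - r * (1 + r) / (1 - r) ^ 3).
Proof.
  intros Hr.
  assert (Hz : Cmod (RtoC r) < 1) by (rewrite Cmod_R, Rabs_pos_eq; lra).
  (* [extremal_coef n = 2 [n = 1] - n] *)
  assert (spike : forall m, is_series (fun n => INR n ^ m * (extremal_coef n + INR n) * r ^ n)
                              (2 * r)).
  { intros m. replace (2 * r) with (INR 1 ^ m * (extremal_coef 1 + INR 1) * r ^ 1)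
      by (rewrite pow1; simpl; ring).
    apply is_series_supported_at_1. intros [|[|n]] Hn; [simpl; ring|lia|].
    unfold extremal_coef. ring. }
  split.
  - apply (is_Cseries_unique (fun n => RtoC (extremal_coef n) * RtoC r ^ n)%C);
      [exact (extremal_series _ Hz)|].
    apply is_Cseries_ext with (fun n => RtoC (extremal_coef n * r ^ n)).
    { intros n. now rewrite RtoC_mult, RtoC_pow. }
    apply is_Cseries_RtoC.
    apply is_series_ext with (fun n => INR n ^ 0 * (extremal_coef n + INR n) * r ^ n
                                       - INR n * r ^ n); [intros n; simpl; ring|].
    exact (is_series_minus _ _ _ _ (spike 0%nat) (is_series_n_geom r Hr)).
  - intros d Hd.
    destruct (power_series_cderiv _ 1 Cmod_extremal_coef extremal extremal_series _ Hz)
      as [d' [Hd' Hsum]].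
    replace d with d'
      by (rewrite <- (is_C_derive_unique _ _ _ Hd); symmetry; apply is_C_derive_unique, Hd').
    apply (is_Cseries_unique _ _ _ Hsum).
    apply is_Cseries_ext with (fun n => RtoC (INR n * extremal_coef n * r ^ n)).
    { intros n. now rewrite !RtoC_mult, RtoC_pow. }
    apply is_Cseries_RtoC.
    apply is_series_ext with (fun n => INR n ^ 1 * (extremal_coef n + INR n) * r ^ n
                                       - INR n ^ 2 * r ^ n); [intros n; simpl; ring|].
    exact (is_series_minus _ _ _ _ (spike 1%nat) (is_series_n2_geom r Hr)).
Qed.

Lemma extremal_quotient (al r : R) (d : C) :
  0 <= al < 1 -> 0 < r < 1 -> radius_eq al r -> cderiv_at extremal (RtoC r) d ->
  (RtoC r * d / extremal (RtoC r))%C = RtoC al.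
Proof.
  intros Hal Hr Hroot Hd.
  destruct (extremal_real r Hr) as [Ef Ed]. rewrite Ef, (Ed d Hd).
  unfold radius_eq in Hroot.
  set (X := 2 * (1 - r) ^ 3 - (1 - r)).
  assert (HX : (1 - al) * X = 2 * r) by (unfold X; nra).
  assert (HXpos : 0 < X) by nra.
  rewrite <- RtoC_div. f_equal.
  - replace (2 * r - r * (1 + r) / (1 - r) ^ 3) with (r * (al * X) / (1 - r) ^ 3)
      by (replace (al * X) with (X - 2 * r) by lra; unfold X; field; lra).
    replace (2 * r - r / (1 - r) ^ 2) with (r * X / (1 - r) ^ 3) by (unfold X; field; lra).
    field. lra.
  - replace (2 * r - r / (1 - r) ^ 2) with (r * X / (1 - r) ^ 3) by (unfold X; field; lra).
    apply Rgt_not_eq, Rdiv_lt_0_compat; [nra|apply pow_lt; lra].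
Qed.

Lemma is_radius_starlike_classF (al r : R) :
  0 <= al < 1 -> 0 < r < 1 -> radius_eq al r -> is_radius_starlike classF al r.
Proof.
  intros Hal Hr Hroot. split.
  - intros x [Hx Hstar]. apply Rnot_lt_le. intros Hrx.
    destruct (Hstar extremal classF_extremal) as [_ Hre].
    destruct (Hre (RtoC r)) as [d [Hd Hlt]]; [rewrite Cmod_R, Rabs_pos_eq; lra|].
    rewrite (extremal_quotient al r d Hal Hr Hroot Hd), re_RtoC in Hlt. lra.
  - intros b Hb. apply Hb. split; [lra|]. intros f Hf. split.
    + intros z Hz. exact (proj1 (classF_quotient_estimate al r f z Hal Hr Hroot Hf Hz)).
    + intros z Hz.
      destruct (classF_quotient_estimate al r f z Hal Hr Hroot Hf Hz) as [_ [d [Hd Hq]]].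
      exists d. split; [exact Hd|]. pose proof (Re_ge_1_sub_Cmod (z * d / f z)%C). lra.
Qed.

Lemma is_radius_parabolic_classF (r : R) :
  0 < r < 1 -> radius_eq (1 / 2) r -> is_radius_parabolic classF r.
Proof.
  intros Hr Hroot. assert (Hal : 0 <= 1 / 2 < 1) by lra. split.
  - intros x [Hx Hpar]. apply Rnot_lt_le. intros Hrx.
    destruct (Hpar extremal classF_extremal (RtoC r)) as [_ [d [Hd Hlt]]];
      [rewrite Cmod_R, Rabs_pos_eq; lra|].
    rewrite (extremal_quotient _ r d Hal Hr Hroot Hd), re_RtoC, <- RtoC_minus, Cmod_R,
      Rabs_left in Hlt by lra.
    lra.
  - intros b Hb. apply Hb. split; [lra|]. intros f Hf z Hz.
    destruct (classF_quotient_estimate _ r f z Hal Hr Hroot Hf Hz) as [F0 [d [Hd Hq]]].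
    split; [exact F0|]. exists d. split; [exact Hd|].
    pose proof (Re_ge_1_sub_Cmod (z * d / f z)%C). lra.
Qed.

Lemma radius_eq_exists (al : R) : 0 <= al < 1 -> exists r, 0 < r < 1 /\ radius_eq al r.
Proof.
  intros Hal.
  set (g := fun x => 1 - al + (1 + al) * x - 2 * (1 - al) * (1 - x) ^ 3).
  assert (Hg : continuity g) by (intros x; apply derivable_continuous_pt; unfold g; reg).
  destruct (IVT g 0 1 Hg ltac:(lra)) as [r [Hr0 Hgr]]; [unfold g; simpl; lra..|].
  unfold g in Hgr. exists r. unfold radius_eq.
  assert (r <> 0) by (intros ->; simpl in Hgr; lra).
  assert (r <> 1) by (intros ->; simpl in Hgr; lra).
  split; lra.
Qed.

Lemma Rpower_third_cube (x : R) : 0 < x -> Rpower x (1 / 3) ^ 3 = x.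
Proof.
  intros Hx. rewrite <- Rpower_pow by apply exp_pos. rewrite Rpower_mult.
  replace (1 / 3 * INR 3) with 1 by (simpl; field). apply Rpower_1, Hx.
Qed.

(* Cardano for [s = 1 - r]: [radius_eq 0 r] reads [2 s^3 + s - 2 = 0]. *)
Lemma radius_eq_0_cardano :
  let r := 1 + / Rpower 6 (2 / 3) *
             (Rpower (sqrt 330 - 18) (1 / 3) - Rpower (sqrt 330 + 18) (1 / 3)) in
  0 < r < 1 /\ radius_eq 0 r.
Proof.
  intros r.
  assert (H330 : sqrt 330 * sqrt 330 = 330) by (apply sqrt_sqrt; lra).
  pose proof (sqrt_pos 330).
  assert (18 < sqrt 330) by nra.
  set (a := Rpower (sqrt 330 - 18) (1 / 3)) in r.
  set (b := Rpower (sqrt 330 + 18) (1 / 3)) in r.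
  assert (Ha3 : a ^ 3 = sqrt 330 - 18) by (apply Rpower_third_cube; lra).
  assert (Hb3 : b ^ 3 = sqrt 330 + 18) by (apply Rpower_third_cube; lra).
  assert (Ha : 0 < a) by apply exp_pos.
  assert (Hab : a < b) by (apply Rlt_Rpower_l; lra).
  assert (Hm : a * b = Rpower 6 (1 / 3)).
  { unfold a, b. rewrite Rpower_mult_distr by lra. f_equal. nra. }
  assert (H6 : Rpower 6 (2 / 3) * (a * b) = 6).
  { rewrite Hm, <- Rpower_plus. replace (2 / 3 + 1 / 3) with 1 by field.
    apply Rpower_1. lra. }
  assert (Hinv : / Rpower 6 (2 / 3) = a * b / 6).
  { assert (0 < Rpower 6 (2 / 3)) by apply exp_pos. field_simplify_eq; lra. }
  assert (Hm3 : (a * b) ^ 3 = 6) by (rewrite Rpow_mult_distr, Ha3, Hb3; nra).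
  set (s := (b - a) * (a * b) / 6).
  assert (Er : r = 1 - s) by (unfold r, s; rewrite Hinv; field).
  assert (Hs3 : 2 * s ^ 3 = 2 - s).
  { replace (2 * s ^ 3) with ((b ^ 3 - a ^ 3 - 3 * (a * b) * (b - a)) * (a * b) ^ 3 / 108)
      by (unfold s; field).
    rewrite Ha3, Hb3, Hm3. unfold s. field. }
  assert (0 < s) by (unfold s; apply Rdiv_lt_0_compat; [apply Rmult_lt_0_compat|]; nra).
  assert (s < 1) by nra.
  unfold radius_eq. rewrite Er. split; [lra|]. replace (1 - (1 - s)) with s by ring. nra.
Qed.

(* Cardano for [s = 1 - r]: [radius_eq (1/2) r] reads [s^3 + 3 s / 2 - 2 = 0]. *)
Lemma radius_eq_half_cardano :
  let r := 1 + / sqrt 2 *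
             (Rpower (3 - 2 * sqrt 2) (1 / 3) - Rpower (3 + 2 * sqrt 2) (1 / 3)) in
  0 < r < 1 /\ radius_eq (1 / 2) r.
Proof.
  intros r.
  assert (H2 : sqrt 2 * sqrt 2 = 2) by (apply sqrt_sqrt; lra).
  pose proof (sqrt_pos 2).
  assert (sqrt 2 < 3 / 2) by nra.
  assert (0 < sqrt 2) by nra.
  set (a := Rpower (3 - 2 * sqrt 2) (1 / 3)) in r.
  set (b := Rpower (3 + 2 * sqrt 2) (1 / 3)) in r.
  assert (Ha3 : a ^ 3 = 3 - 2 * sqrt 2) by (apply Rpower_third_cube; lra).
  assert (Hb3 : b ^ 3 = 3 + 2 * sqrt 2) by (apply Rpower_third_cube; lra).
  assert (Ha : 0 < a) by apply exp_pos.
  assert (Hab : a < b) by (apply Rlt_Rpower_l; lra).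
  assert (Hm : a * b = 1).
  { unfold a, b. rewrite Rpower_mult_distr by lra.
    replace ((3 - 2 * sqrt 2) * (3 + 2 * sqrt 2)) with 1 by nra.
    unfold Rpower. rewrite ln_1, Rmult_0_r. apply exp_0. }
  set (s := (b - a) * sqrt 2 / 2).
  assert (Er : r = 1 - s).
  { unfold r, s. replace (/ sqrt 2) with (sqrt 2 / 2) by (field_simplify_eq; lra). field. }
  assert (Hs3 : s ^ 3 = 2 - 3 / 2 * s).
  { replace (s ^ 3) with ((b ^ 3 - a ^ 3 - 3 * (a * b) * (b - a)) * (sqrt 2 * sqrt 2) * sqrt 2 / 8)
      by (unfold s; field).
    rewrite Ha3, Hb3, Hm, H2. unfold s. field_simplify. nra. }
  assert (0 < s) by (unfold s; apply Rdiv_lt_0_compat; [apply Rmult_lt_0_compat|]; lra).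
  assert (s < 1) by nra.
  unfold radius_eq. rewrite Er. split; [lra|]. replace (1 - (1 - s)) with s by ring. nra.
Qed.

Theorem corollary2p2 :
  (forall alpha : R, 0 <= alpha < 1 ->
     (exists r : R, 0 < r < 1 /\
        2 * (1 - alpha) * (1 - r) ^ 3 = 1 - alpha + (1 + alpha) * r) /\
     (forall r : R, 0 < r < 1 ->
        2 * (1 - alpha) * (1 - r) ^ 3 = 1 - alpha + (1 + alpha) * r ->
        is_radius_starlike classF alpha r)) /\
  is_radius_starlike classF 0
    (1 + / Rpower 6 (2 / 3) *
         (Rpower (sqrt 330 - 18) (1 / 3) - Rpower (sqrt 330 + 18) (1 / 3))) /\
  is_radius_starlike classF (1 / 2)
    (1 + / sqrt 2 *
         (Rpower (3 - 2 * sqrt 2) (1 / 3) - Rpower (3 + 2 * sqrt 2) (1 / 3))) /\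
  is_radius_parabolic classF
    (1 + / sqrt 2 *
         (Rpower (3 - 2 * sqrt 2) (1 / 3) - Rpower (3 + 2 * sqrt 2) (1 / 3))).
Proof.
  destruct radius_eq_0_cardano as [Hr0 Hroot0].
  destruct radius_eq_half_cardano as [Hr12 Hroot12].
  split; [|split; [|split]].
  - intros al Hal. split; [exact (radius_eq_exists al Hal)|].
    intros r Hr Hroot. exact (is_radius_starlike_classF al r Hal Hr Hroot).
  - apply is_radius_starlike_classF; [lra|exact Hr0|exact Hroot0].
  - apply is_radius_starlike_classF; [lra|exact Hr12|exact Hroot12].
  - exact (is_radius_parabolic_classF _ Hr12 Hroot12).
Qed.
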